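(* Let $A$ be a ghor algebra with cycle algebra $S$, and let $\mathfrak{q} \in \operatorname{Spec}S$. Then every subpath of a locally invertible cycle in the cyclic localization $A_{\mathfrak{q}}$ is locally invertible.
   Context: $k$ is an algebraically closed field; $Q$ is a dimer quiver on a compact orientable surface $\Sigma$ (smooth or with two points identified), i.e. a quiver embedded in $\Sigma$ such that each component of $\Sigma\setminus Q$ is simply connected and bounded by an oriented cycle (unit cycle). A perfect matching is a set of arrows $x$ meeting each unit cycle in exactly one arrow; $\mathcal{P}$ is the set of them. With $n=|Q_0|$, $\eta: kQ \to M_n(k[\mathcal{P}])$ is the algebra map $\eta(e_i)=e_{ii}$, $\eta(a) = e_{\operatorname{h}(a),\operatorname{t}(a)}\prod_{x\ni a} x$, and $A = kQ/\ker\eta$ is the ghor algebra. Via $\eta$, $A$ is a matrix ring $[A_{ij}] \subseteq M_n(B)$ with $B = k[\mathcal{P}]$, where $A_{ij}\subseteq B$ is the set of single nonzero entries of images of elements of $e_iAe_j$, and $A_i := A_{ii}$. The cycle algebra is $S = k[\cup_i A_i]$. For $\mathfrak{q} \in \operatorname{Spec}S$, the cyclic localization is $A_{\mathfrak{q}} = \langle [A_{ij}(A_j)_{\mathfrak{q}\cap A_j}]_{i,j}\rangle \subseteq M_n(\operatorname{Frac}B)$, where $(A_j)_{\mathfrak{q}\cap A_j}$ is the localization of $A_j$ at the prime $\mathfrak{q}\cap A_j$. A path $p$ (with tail $\operatorname{t}(p)$, head $\operatorname{h}(p)$) is locally invertible in $A_{\mathfrak{q}}$ if there is $q \in e_{\operatorname{t}(p)}A_{\mathfrak{q}}e_{\operatorname{h}(p)}$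 with $qp = e_{\operatorname{t}(p)}$ and $pq = e_{\operatorname{h}(p)}$. *)

From HB Require Import structures.
From mathcomp Require Import all_boot all_order all_algebra all_fingroup.
From mathcomp Require Import fraction.
From mathcomp Require Import mpoly.

Set Implicit Arguments.
Unset Strict Implicit.
Unset Printing Implicit Defensive.

Import GRing.Theory.
Local Open Scope ring_scope.

Section Ghor.

(* [tl] and head [hd].  The embedding in the surface is encoded             *)
(* combinatorially: [sp a] (resp. [sm a]) is the arrow following [a] in the *)
(* boundary of the positively (resp. negatively) oriented unit cycle        *)
(* containing [a]; the unit cycles are the orbits of [sp] and [sm].         *)
Variables (n : nat) (Ar : finType) (tl hd : Ar -> 'I_n) (sp sm : {perm Ar}).

(* rotation around the head of an arrow: a |-> sm^-1 (sp a) *)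
Definition rot : {perm Ar} := (sp * sm^-1)%g.

(* number of "corners" (links) at vertex v : rot-orbits of arrows into v *)
Definition nlinks (v : 'I_n) : nat :=
  #|[set porbit rot a | a in [set a | hd a == v]]|.

Definition adjv : rel 'I_n :=
  fun v w => [exists a, ((tl a == v) && (hd a == w)) || ((hd a == v) && (tl a == w))].

(* Q is a dimer quiver on a compact connected orientable surface, either    *)
(* smooth (every vertex has one link) or with two points identified (exactly *)
(* one vertex has two links).                                               *)
Definition is_dimer : Prop :=
  [/\ (forall a, tl (sp a) = hd a),
      (forall a, tl (sm a) = hd a),
      (forall v, (1 <= nlinks v <= 2)%N),
      (forall v w, nlinks v = 2%N -> nlinks w = 2%N -> v = w)
    & (forall v w, connect adjv v w)].

Definition perfectb (x : {set Ar}) : bool :=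
  [forall a, (#|x :&: porbit sp a| == 1%N) && (#|x :&: porbit sm a| == 1%N)].

Definition PM := {x : {set Ar} | perfectb x}.

Variable k : closedFieldType.

Definition B := {mpoly k[#|{: PM}|]}.

Definition pmvar (x : PM) : B := 'X_(enum_rank x).

Definition amono (a : Ar) : B := \prod_(x : PM | a \in val x) pmvar x.

(* Paths: a pair (tail vertex, list of arrows in traversal order).          *)
Definition qpath := ('I_n * seq Ar)%type.

Fixpoint path_ok (v : 'I_n) (l : seq Ar) : bool :=
  if l is a :: l' then (tl a == v) && path_ok (hd a) l' else true.

Definition is_path (p : qpath) : bool := path_ok p.1 p.2.
Definition ptail (p : qpath) : 'I_n := p.1.
Definition phead (p : qpath) : 'I_n := last p.1 (map hd p.2).

Definition pmono (p : qpath) : B := \prod_(a <- p.2) amono a.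

Definition eta_path (p : qpath) : 'M[B]_n :=
  pmono p *: delta_mx (phead p) (ptail p).

(* The ghor algebra A, identified with eta(kQ) inside M_n(B). *)
Definition inA (M : 'M[B]_n) : Prop :=
  exists s : seq (k * qpath),
    all (fun cp => is_path cp.2) s /\ M = \sum_(cp <- s) ((cp.1%:MP : B) *: eta_path cp.2).

Definition idem (i : 'I_n) : 'M[B]_n := delta_mx i i.

(* A_ij : the (single nonzero) entries of elements of e_i A e_j *)
Definition Aij (i j : 'I_n) (f : B) : Prop :=
  exists M, [/\ inA M, idem i *m M *m idem j = M & M i j = f].

Definition Ai (i : 'I_n) : B -> Prop := Aij i i.

Inductive kgen (G : B -> Prop) : B -> Prop :=
| kgen_base f : G f -> kgen G f
| kgen_one : kgen G 1
| kgen_add f g : kgen G f -> kgen G g -> kgen G (f + g)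
| kgen_mul f g : kgen G f -> kgen G g -> kgen G (f * g)
| kgen_scale (c : k) f : kgen G f -> kgen G (c *: f).

Definition cycS : B -> Prop := kgen (fun f => exists i, Ai i f).

Definition primeS (q : B -> Prop) : Prop :=
  [/\ (forall f, q f -> cycS f) /\ q 0,
      (forall f g, q f -> q g -> q (f + g)),
      (forall f g, cycS f -> q g -> q (f * g)),
      ~ q 1
    & (forall f g, cycS f -> cycS g -> q (f * g) -> q f \/ q g)].

Definition FB := {fraction B}.

Definition toFB (f : B) : FB := @FracField.tofrac B f.

Definition Aloc (q : B -> Prop) (j : 'I_n) (z : FB) : Prop :=
  exists f g, [/\ Ai j f, Ai j g, ~ q g & z = toFB f / toFB g].

Definition locgen (q : B -> Prop) (M : 'M[FB]_n) : Prop :=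
  forall i j, exists a z, [/\ Aij i j a, Aloc q j z & M i j = toFB a * z].

Inductive mxgen (G : 'M[FB]_n -> Prop) : 'M[FB]_n -> Prop :=
| mxgen_base M : G M -> mxgen G M
| mxgen_one : mxgen G 1%:M
| mxgen_add M N : mxgen G M -> mxgen G N -> mxgen G (M + N)
| mxgen_mul M N : mxgen G M -> mxgen G N -> mxgen G (M *m N)
| mxgen_scale (c : k) M : mxgen G M -> mxgen G (toFB (c%:MP) *: M).

Definition Aq (q : B -> Prop) : 'M[FB]_n -> Prop := mxgen (locgen q).

Definition frac_mx (M : 'M[B]_n) : 'M[FB]_n := map_mx (toFB) M.

Definition fidem (i : 'I_n) : 'M[FB]_n := delta_mx i i.

Definition loc_invertible (q : B -> Prop) (p : qpath) : Prop :=
  exists Q, [/\ Aq q Q,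
               fidem (ptail p) *m Q *m fidem (phead p) = Q,
               Q *m frac_mx (eta_path p) = fidem (ptail p)
             & frac_mx (eta_path p) *m Q = fidem (phead p)].

Definition is_cycle (c : qpath) : bool :=
  [&& is_path c, c.2 != [::] & phead c == ptail c].

Definition subpath (p c : qpath) : Prop :=
  is_path p /\ exists l1 l2, c.2 = l1 ++ p.2 ++ l2 /\ p.1 = last c.1 (map hd l1).

End Ghor.

(** Split the cycle at the subpath as [c = r1 p r2] and let [Q] be
    the inverse of [c] in [A_q].  Then [eta r1 * Q * eta r2] lies in [A_q] and
    inverts [eta p]: [Q] lies in the corner [e_t A_q e_t], so it is a scalar
    multiple of [e_{t,t}], and all the scalar factors commute. *)
From Pilot Require Import Defs.
From HB Require Import structures.
From mathcomp Require Import all_boot all_order all_algebra all_fingroup.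
From mathcomp Require Import fraction.
From mathcomp Require Import mpoly.
From mathcomp Require Import ring.

Set Implicit Arguments.
Unset Strict Implicit.
Unset Printing Implicit Defensive.
Import GRing.Theory.

Local Open Scope ring_scope.

Section ScaledMatrixUnits.

Variables (R : comNzRingType) (n : nat).
Implicit Types (M : 'M[R]_n) (i j l : 'I_n).

Lemma mul_scale_delta_mx (a b : R) i j l :
  (a *: delta_mx i j) *m (b *: delta_mx j l) = (a * b) *: delta_mx i l.
Proof. by rewrite -scalemxAl -scalemxAr mul_delta_mx scalerA. Qed.

Lemma delta_mx_corner M i j :
  delta_mx i i *m M *m delta_mx j j = M i j *: delta_mx i j.
Proof.
apply/matrixP=> a b; rewrite !mxE (bigD1 j) //= big1; last first.
  by move=> c /negbTE cj; rewrite [delta_mx j j c b]mxE cj mulr0.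
rewrite !mxE (bigD1 i) //= big1; last first.
  by move=> d /negbTE di; rewrite [delta_mx i i a d]mxE di andbF mul0r.
by rewrite !mxE !eqxx; case: (a == i); case: (b == j);
  rewrite /= ?(mul1r, mulr1, mul0r, mulr0, addr0).
Qed.

Lemma corner_factor_inverse (t u v : 'I_n) (a1 a a2 : R) M :
    delta_mx t t *m M *m delta_mx t t = M ->
    M *m ((a1 * a * a2) *: delta_mx t t) = delta_mx t t ->
  let N := (a1 *: delta_mx u t) *m M *m (a2 *: delta_mx t v) in
  [/\ delta_mx u u *m N *m delta_mx v v = N,
      N *m (a *: delta_mx v u) = delta_mx u u
    & (a *: delta_mx v u) *m N = delta_mx v v].
Proof.
rewrite delta_mx_corner => <-; set m := M t t.
rewrite mul_scale_delta_mx => /matrixP/(_ t t).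
rewrite !mxE eqxx /= mulr1n mulr1 => inv_c.
have inv_l : a1 * m * a2 * a = 1 by rewrite -inv_c; ring.
have inv_r : a * (a1 * m * a2) = 1 by rewrite -inv_c; ring.
rewrite !mul_scale_delta_mx delta_mx_corner inv_l inv_r !scale1r.
by rewrite !mxE !eqxx /= mulr1; split.
Qed.

End ScaledMatrixUnits.

Lemma path_ok_cat (n : nat) (Ar : finType) (tl hd : Ar -> 'I_n) v l l' :
  path_ok tl hd v (l ++ l') =
  path_ok tl hd v l && path_ok tl hd (last v (map hd l)) l'.
Proof. by elim: l v => [|a l IHl] v //=; rewrite IHl andbA. Qed.

Section GhorPaths.

Variables (n : nat) (Ar : finType) (tl hd : Ar -> 'I_n)
  (sp sm : {perm Ar}) (k : closedFieldType).
Implicit Types (p c : qpath n Ar) (q : B sp sm k -> Prop).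

Local Notation eta := (eta_path hd sp sm k).
Local Notation pmono := (pmono sp sm k).

Lemma frac_eta_path p :
  frac_mx (eta p) = toFB (pmono p) *: delta_mx (phead hd p) (ptail p).
Proof. by rewrite /frac_mx /toFB map_mxZ map_delta_mx. Qed.

Lemma inA_eta_path p : is_path tl hd p -> inA tl hd (eta p).
Proof.
move=> p_ok; exists [:: (1, p)]; split; first by rewrite /= p_ok.
by rewrite big_seq1 /= mpolyC1 scale1r.
Qed.

Lemma Aij_eta_path p i j : is_path tl hd p -> Aij tl hd i j (eta p i j).
Proof.
move=> p_ok.
have [/andP[/eqP-> /eqP->] | ne] := boolP ((i == phead hd p) && (j == ptail p)).
  exists (eta p); split=> //; first exact: inA_eta_path.
  by rewrite /eta_path /idem -scalemxAr -scalemxAl !mul_delta_mx.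
exists 0; split; first by exists [::]; rewrite big_nil.
  by rewrite mulmx0 mul0mx.
by rewrite /eta_path !mxE (negbTE ne) mulr0.
Qed.

Lemma Ai1 (j : 'I_n) : @Ai _ _ tl hd sp sm k j 1.
Proof.
have := @Aij_eta_path (j, [::]) j j isT.
by rewrite /eta_path /pmono big_nil scale1r mxE !eqxx.
Qed.

Lemma Aq_eta_path q p :
  ~ q 1 -> is_path tl hd p -> Aq tl hd q (frac_mx (eta p)).
Proof.
move=> q1 p_ok; apply: mxgen_base => i j; exists (eta p i j), 1; split.
- exact: Aij_eta_path.
- by exists 1, 1; rewrite /toFB tofrac1 divr1; split; try exact: Ai1.
- by rewrite mxE mulr1.
Qed.

Lemma cycle_subpath_split c p : is_cycle tl hd c -> subpath tl hd p c ->
  exists l1 l2,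
  [/\ is_path tl hd (ptail c, l1), is_path tl hd (phead hd p, l2),
    phead hd (ptail c, l1) = ptail p, phead hd (phead hd p, l2) = ptail c
  & pmono c = pmono (ptail c, l1) * pmono p * pmono (phead hd p, l2)].
Proof.
case: c p => t lc [tp lp] /and3P[c_ok _ /eqP c_closed].
move=> [_ [l1 [l2 [/= lc_eq /= ->]]]].
subst lc; exists l1, l2; move: c_ok c_closed.
rewrite /is_path /phead /= !path_ok_cat !map_cat !last_cat => /and3P[r1_ok _ r2_ok].
by split=> //; rewrite /Defs.pmono !big_cat /= mulrA.
Qed.

End GhorPaths.

Theorem lemma4p4 (n : nat) (Ar : finType) (tl hd : Ar -> 'I_n)
    (sp sm : {perm Ar}) (k : closedFieldType) (q : B sp sm k -> Prop) :
  is_dimer tl hd sp sm ->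
  primeS tl hd q ->
  forall c p : qpath n Ar,
    is_cycle tl hd c ->
    loc_invertible tl hd q c ->
    subpath tl hd p c ->
    loc_invertible tl hd q p.
Proof.
move=> _ [_ _ _ q1 _] c p c_cycle [Q [AQ cornerQ Qc _]] p_sub.
have /and3P[_ _ /eqP c_closed] := c_cycle.
have [l1 [l2 [r1_ok r2_ok r1_head r2_head mono_c]]] :=
  cycle_subpath_split sp sm k c_cycle p_sub.
rewrite /fidem c_closed in cornerQ Qc.
rewrite frac_eta_path c_closed mono_c /toFB !rmorphM in Qc.
have [cornerN Np pN] := corner_factor_inverse (ptail p) (phead hd p) cornerQ Qc.
exists (frac_mx (eta_path hd sp sm k (ptail c, l1)) *m Q *m
        frac_mx (eta_path hd sp sm k (phead hd p, l2))).
split; first by apply: mxgen_mul; [apply: mxgen_mul|] => //; apply: Aq_eta_path.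
all: rewrite /fidem !frac_eta_path r1_head r2_head.
- exact: cornerN.
- exact: Np.
- exact: pN.
Qed.
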